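(* Let $d\ge2$ and $\overrightarrow{w}\in(0,\infty)^d$ with $w_1=\max\{w_1,\dots,w_d\}$ and $2w_1=\sum_{i=1}^dw_i$. Then for every random vector $\overrightarrow{U}=(U_1,\dots,U_d)$ with uniform$[0,1]$ marginals, $$\mathrm{Cov}\left(U_1,\sum_{i=1}^dw_iU_i\right)\ge0,$$ with equality if and only if $\overrightarrow{U}$ is $\overrightarrow{w}$-CM.
   Context: A random vector $\overrightarrow{U}=(U_1,\dots,U_d)$ with each $U_i$ uniform on $[0,1]$ is $\overrightarrow{w}$-CM if $P\left(\sum_{i=1}^d w_iU_i=\frac12\sum_{i=1}^d w_i\right)=1$. *)

From HB Require Import structures.
From mathcomp Require Import all_boot all_order all_algebra.
From mathcomp Require Import all_classical all_reals all_analysis.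
Set Implicit Arguments. Unset Strict Implicit. Unset Printing Implicit Defensive.
Import Order.TTheory GRing.Theory Num.Theory.
Local Open Scope classical_set_scope.
Local Open Scope ring_scope.

Definition uniform01 d (T : measurableType d) (R : realType)
  (P : probability T R) (X : {RV P >-> R}) : Prop :=
  distribution P X = uniform_prob (@ltr01 R).

Definition wsum d (T : measurableType d) (R : realType) (P : probability T R)
  (n : nat) (w : 'I_n -> R) (U : 'I_n -> {RV P >-> R}) : T -> R :=
  fun t => \sum_(i < n) w i * U i t.

Definition wCM d (T : measurableType d) (R : realType) (P : probability T R)
  (n : nat) (w : 'I_n -> R) (U : 'I_n -> {RV P >-> R}) : Prop :=
  P [set t | wsum w U t = 2^-1 * \sum_(i < n) w i] = 1%E.

(* Centre the marginals, Y_i = U_i - 1/2, so that Cov(U_1, sum_i w_i U_i) = E[Y_1 sum_i w_i Y_i].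
   Since sum_(i <> 1) w_i = w_1,
     Y_1 sum_i w_i Y_i = sum_(i <> 1) w_i/2 (Y_1 + Y_i)^2 + sum_(i <> 1) w_i/2 (Y_1^2 - Y_i^2),
   and the last sum has expectation 0 because all Y_i have the same law.  So the covariance is the
   expectation of a sum of squares.  It vanishes iff a.s. Y_i = -Y_1 for every i <> 1, which forces
   sum_i w_i Y_i = 0, i.e. the w-CM property; conversely w-CM kills the integrand a.s. *)

From HB Require Import structures.
From mathcomp Require Import all_boot all_order all_algebra.
From mathcomp Require Import all_classical all_reals all_analysis.
From mathcomp Require Import ring lra measurable_realfun uniform_distribution beta_distribution.
Import Order.TTheory GRing.Theory Num.Theory numFieldNormedType.Exports.
Local Open Scope classical_set_scope.
Local Open Scope ring_scope.

Set Implicit Arguments.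
Unset Strict Implicit.
Unset Printing Implicit Defensive.

Section bounded_measurable.
Context d (T : measurableType d) (R : realType).
Implicit Types f g : T -> R.

Definition bounded_measurable f :=
  measurable_fun setT f /\ exists M : R, forall t, `|f t| <= M.

Lemma bounded_measurable_cst (c : R) : bounded_measurable (cst c).
Proof. by split => //; exists `|c|. Qed.

Lemma bounded_measurableD f g :
  bounded_measurable f -> bounded_measurable g -> bounded_measurable (f \+ g).
Proof.
move=> [mf [M fM]] [mg [N gN]]; split; first exact: measurable_funD.
by exists (M + N) => t; rewrite (le_trans (ler_normD _ _)) ?lerD.
Qed.

Lemma bounded_measurableN f : bounded_measurable f -> bounded_measurable (\- f).
Proof.
move=> [mf [M fM]]; split; first exact: measurableT_comp.
by exists M => t /=; rewrite normrN.
Qed.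

Lemma bounded_measurableM f g :
  bounded_measurable f -> bounded_measurable g -> bounded_measurable (f \* g).
Proof.
move=> [mf [M fM]] [mg [N gN]]; split; first exact: measurable_funM.
by exists (M * N) => t /=; rewrite normrM ler_pM.
Qed.

Lemma bounded_measurable_sum (I : Type) (s : seq I) (p : pred I) (F : I -> T -> R) :
  (forall i, bounded_measurable (F i)) ->
  bounded_measurable (fun t => \sum_(i <- s | p i) F i t).
Proof.
move=> bF; elim: s => [|i s IHs].
  by under eq_fun do rewrite big_nil; exact: bounded_measurable_cst.
under eq_fun do rewrite big_cons; case: (p i) => //.
exact: bounded_measurableD.
Qed.

Lemma bounded_measurable_integrable (mu : {finite_measure set T -> \bar R}) f :
  bounded_measurable f -> mu.-integrable setT (EFin \o f).
Proof.
move=> [mf [M fM]].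
apply: (le_integrable measurableT _ _ (finite_measure_integrable_cst mu M measurableT)).
  exact/measurable_EFinP.
by move=> t _ /=; rewrite lee_fin (le_trans (fM t)) ?ler_norm.
Qed.

Lemma bounded_measurable_integral_sum (mu : {finite_measure set T -> \bar R})
    (I : finType) (p : pred I) (F : I -> T -> R) :
  (forall i, bounded_measurable (F i)) ->
  (\int[mu]_t (\sum_(i | p i) F i t)%:E = \sum_(i | p i) \int[mu]_t (F i t)%:E)%E.
Proof.
move=> bF; under eq_integral do rewrite -sumEFin.
by apply: (integral_sum measurableT) => i; exact: bounded_measurable_integrable.
Qed.

End bounded_measurable.
Arguments bounded_measurable_cst {d T R}.

Definition clamp01 {R : realType} (x : R) : R := Order.min (Order.max x 0) 1.

Section clamp01.
Context (R : realType).
Implicit Types x : R.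

Lemma clamp01_ge0 x : 0 <= clamp01 x.
Proof. by rewrite le_min le_max lexx orbT ler01. Qed.

Lemma clamp01_le1 x : clamp01 x <= 1.
Proof. by rewrite ge_min lexx orbT. Qed.

Lemma clamp01_id x : 0 <= x <= 1 -> clamp01 x = x.
Proof. by case/andP=> x0 x1; rewrite /clamp01 max_l// min_l. Qed.

Lemma measurable_clamp01 : measurable_fun setT (@clamp01 R).
Proof.
exact: measurable_minr (measurable_maxr (@measurable_id _ R setT)
  (measurable_cst (0 : R))) (measurable_cst (1 : R)).
Qed.

End clamp01.

Lemma uniform_prob_itvoy (R : realType) (r : R) : 0 <= r <= 1 ->
  uniform_prob (@ltr01 R) `]r, +oo[ = (1 - r)%:E.
Proof.
case/andP=> r0 r1; rewrite /uniform_prob integral_uniform_pdf.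
have -> : `]r, +oo[%classic `&` `[0%R, 1%R]%classic = `]r, 1%R]%classic :> set R.
  apply/seteqP; split => x /=; rewrite !in_itv /= ?andbT.
    by case=> -> /andP[_ ->].
  by case/andP=> rx ->; rewrite rx (le_trans r0 (ltW rx)).
rewrite (eq_integral (cst 1%E)); last first.
  move=> x; rewrite inE /= in_itv /= => /andP[rx x1].
  by rewrite /uniform_pdf x1 (le_trans r0 (ltW rx)) subr0 invr1.
rewrite integral_cst//= mul1e lebesgue_measure_itv /= lte_fin.
by case: ltgtP r1 => // ->; rewrite subrr.
Qed.

Section probability_lemmas.
Context d (T : measurableType d) (R : realType) (P : probability T R).

Lemma probability1_aeP (S : set T) : measurable S ->
  P S = 1%E <-> {ae P, forall t, S t}.
Proof.
move=> mS; split=> [PS1|[N [mN PN0 notSN]]].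
  exists (~` S); split => //; first exact: measurableC.
  by rewrite probability_setC// PS1 subee.
have PnotS0 : P (~` S) = 0%E.
  by apply/eqP; rewrite -measure_le0 -PN0 le_measure ?inE//; exact: measurableC.
by rewrite -[S]setCK probability_setC ?PnotS0 ?sube0//; exact: measurableC.
Qed.

Lemma covariance_centered_integral (X Y : T -> R) (a b : R) :
  ('E_P[X] = a%:E)%E -> ('E_P[Y] = b%:E)%E ->
  covariance P X Y = (\int[P]_t ((X t - a) * (Y t - b))%:E)%E.
Proof. by move=> EX EY; rewrite covariance.unlock EX EY expectation.unlock. Qed.

Lemma ge0_integral_eq_distribution (X Y : {RV P >-> R}) (g : R -> R) :
  distribution P X = distribution P Y ->
  measurable_fun setT g -> (forall x, 0 <= g x) ->
  (\int[P]_t (g (X t))%:E = \int[P]_t (g (Y t))%:E)%E.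
Proof.
move=> XY mg g0; have mEg : measurable_fun setT (EFin \o g) by exact/measurable_EFinP.
rewrite -!(@ge0_integral_distribution _ _ _ _ _ P _ (EFin \o g)) ?XY// => x.
all: by rewrite lee_fin.
Qed.

Lemma uniform01_ae_in01 (X : {RV P >-> R}) : uniform01 X ->
  {ae P, forall t, 0 <= X t <= 1}.
Proof.
move=> unifX; have mX01 : measurable (X @^-1` `[0%R, 1%R]).
  exact: measurable_funPTI.
apply: filterS ((probability1_aeP mX01).1 _) => [t|]; first by rewrite /= in_itv.
transitivity (distribution P X `[0%R, 1%R]); first by [].
by rewrite unifX /uniform_prob integral_uniform_pdf1.
Qed.

Lemma uniform01_clamp01_ccdf (X : {RV P >-> R}) (r : R) : uniform01 X -> 0 <= r ->
  P ((clamp01 \o X) @^-1` `]r, +oo[) = ((@XMonemX R 0 1 \_ (`[0%R, 1%R]%classic : set R)) r)%:E.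
Proof.
move=> unifX r0; rewrite patchE XMonemX0n expr1.
have [r1|r1] := ltP r 1.
- have -> : (clamp01 \o X) @^-1` `]r, +oo[ = X @^-1` `]r, +oo[.
    have r_lt0F : (r < 0) = false by rewrite ltNge r0.
    apply/seteqP; split=> t /=;
    by rewrite !in_itv /= !andbT /clamp01 lt_min lt_max r1 r_lt0F andbT orbF.
  rewrite mem_set /=; last by rewrite in_itv /= r0 ltW.
  transitivity (distribution P X `]r, +oo[); first by [].
  by rewrite unifX uniform_prob_itvoy // r0 ltW.
- have -> : (clamp01 \o X) @^-1` `]r, +oo[ = set0.
    apply/seteqP; split=> t //=.
    by rewrite in_itv /= andbT ltNge (le_trans (clamp01_le1 _)).
  rewrite measure0; case: ifPn => // /set_mem; rewrite /= in_itv /= => /andP[_ r1'].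
  have -> : r = 1 by apply/le_anti; rewrite r1 r1'.
  by rewrite /unstable.onem subrr.
Qed.

Lemma uniform01_clamp01_mean (X : {RV P >-> R}) : uniform01 X ->
  (\int[P]_t (clamp01 (X t))%:E = (2^-1)%:E)%E.
Proof.
move=> unifX.
have mcX : clamp01 \o X \in mfun.
  by rewrite inE; apply: measurableT_comp => //; exact: measurable_clamp01.
pose cX : {mfun T >-> R} := Sub (clamp01 \o X) mcX.
transitivity ('E_P[cX])%E; first by rewrite expectation_def.
rewrite ge0_expectation_ccdf; last by move=> t; exact: clamp01_ge0.
(* layer-cake: the ccdf of [clamp01 X] is [1 - r] on [0, 1], and its integral is [beta_fun 1 2] *)
rewrite -[X in _ = X%:E](beta_fun1Sn 1) EFin_beta_fun integral_mkcond.
apply: eq_integral => r _; rewrite patchE; case: ifPn => [|r_lt0].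
  by rewrite inE /= in_itv /= andbT => r0; exact: uniform01_clamp01_ccdf.
rewrite patchE ifF//; apply/negbTE; apply: contra r_lt0.
by rewrite !inE /= !in_itv /= andbT => /andP[].
Qed.

End probability_lemmas.

Section balanced_weights.
Context (R : realFieldType) (n : nat) (w : 'I_n -> R) (j : 'I_n).
Hypothesis w_balanced : \sum_(i | i != j) w i = w j.
Implicit Types y : 'I_n -> R.

Definition antipodal_defect y := \sum_(i | i != j) w i / 2 * (y j + y i) ^+ 2.

Lemma mul_weighted_sum_balanced y :
  y j * \sum_i w i * y i =
  antipodal_defect y + \sum_(i | i != j) w i / 2 * (y j ^+ 2 - y i ^+ 2).
Proof.
rewrite /antipodal_defect -big_split /=.
rewrite [RHS](eq_bigr (fun i => w i * y j ^+ 2 + y j * (w i * y i))); last first.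
  by move=> i _; field.
by rewrite big_split /= -mulr_suml -mulr_sumr w_balanced (bigD1 j) //=; ring.
Qed.

Hypothesis w_pos : forall i, 0 < w i.

Let antipodal_defect_term_ge0 y i : 0 <= w i / 2 * (y j + y i) ^+ 2.
Proof. by rewrite mulr_ge0 ?sqr_ge0 ?divr_ge0 ?ler0n ?ltW. Qed.

Lemma antipodal_defect_ge0 y : 0 <= antipodal_defect y.
Proof. by apply: sumr_ge0 => i _. Qed.

Lemma weighted_sum_eq0_of_antipodal_defect_eq0 y :
  antipodal_defect y = 0 -> \sum_i w i * y i = 0.
Proof.
move=> defect0.
have antipodal i : i != j -> y i = - y j.
  move=> ij; have /eqP := psumr_eq0P (fun i _ => antipodal_defect_term_ge0 y i) defect0 ij.
  rewrite mulf_eq0 sqrf_eq0 mulf_eq0 invr_eq0 pnatr_eq0 orbF (gt_eqF (w_pos i)) /=.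
  by rewrite addrC addr_eq0 => /eqP.
rewrite (bigD1 j) //= (eq_bigr (fun i => - (w i * y j))); last first.
  by move=> i ij; rewrite antipodal // mulrN.
by rewrite sumrN -mulr_suml w_balanced subrr.
Qed.

End balanced_weights.

Section covariance_balanced_wsum.
Context (R : realType) (dT : measure_display) (T : measurableType dT) (P : probability T R).
Context (n : nat) (w : 'I_n -> R) (U : 'I_n -> {RV P >-> R}) (j : 'I_n).
Hypothesis U_uniform : forall i, uniform01 (U i).
Hypothesis w_pos : forall i, 0 < w i.
Hypothesis w_balanced : 2 * w j = \sum_i w i.

Let w_off_j : \sum_(i | i != j) w i = w j.
Proof. by move: w_balanced; rewrite (bigD1 j) //=; lra. Qed.

(* [U i] agrees a.s. with [clamp01 \o U i], which is bounded: this makes every integrand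
   below integrable at no cost. *)
Definition centered i t := clamp01 (U i t) - 2^-1.

Definition centered_wsum t := \sum_i w i * centered i t.

Let clamp01_U_ae : {ae P, forall t i, clamp01 (U i t) = U i t}.
Proof.
apply: filter_forall => i.
by apply: filterS (uniform01_ae_in01 (U_uniform i)) => t; exact: clamp01_id.
Qed.

Let bounded_clamp01_U i : bounded_measurable (clamp01 \o U i).
Proof.
split; first by apply: measurableT_comp => //; exact: measurable_clamp01.
by exists 1 => t; rewrite ger0_norm ?clamp01_ge0 ?clamp01_le1.
Qed.

Let bounded_centered i : bounded_measurable (centered i).
Proof. exact: bounded_measurableD (bounded_clamp01_U i) (bounded_measurable_cst _). Qed.

Let bounded_centered_wsum : bounded_measurable centered_wsum.
Proof.
apply: bounded_measurable_sum => i.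
exact: bounded_measurableM (bounded_measurable_cst _) (bounded_centered i).
Qed.

Let expectation_U i : ('E_P[U i] = (2^-1)%:E)%E.
Proof.
rewrite expectation_def -(uniform01_clamp01_mean (U_uniform i)).
apply: ae_eq_integral => //.
- exact/measurable_EFinP.
- by apply/measurable_EFinP; case: (bounded_clamp01_U i).
- by apply: filterS clamp01_U_ae => t U01 _; rewrite U01.
Qed.

Let bounded_wclamp01_U i : bounded_measurable (fun t => w i * clamp01 (U i t)).
Proof. exact: bounded_measurableM (bounded_measurable_cst _) (bounded_clamp01_U i). Qed.

Let measurable_wsum : measurable_fun setT (wsum w U).
Proof. by apply: measurable_sum => i; exact: measurable_funM. Qed.

Let expectation_wsum : ('E_P[wsum w U] = (2^-1 * \sum_i w i)%:E)%E.
Proof.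
rewrite expectation.unlock.
transitivity (\int[P]_t (\sum_i w i * clamp01 (U i t))%:E)%E.
  apply: ae_eq_integral => //.
  - exact/measurable_EFinP.
  - apply/measurable_EFinP.
    by case: (bounded_measurable_sum (index_enum _) predT bounded_wclamp01_U).
  - apply: filterS clamp01_U_ae => t U01 _; congr EFin.
    by apply: eq_bigr => i _; rewrite U01.
rewrite bounded_measurable_integral_sum // mulr_sumr -sumEFin.
apply: eq_bigr => i _; under eq_integral do rewrite EFinM.
rewrite integralZl //; last exact: bounded_measurable_integrable (bounded_clamp01_U i).
by rewrite (uniform01_clamp01_mean (U_uniform i)) -EFinM mulrC.
Qed.

Let wsum_centered t : (forall i, clamp01 (U i t) = U i t) ->
  wsum w U t = centered_wsum t + 2^-1 * \sum_i w i.
Proof.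
move=> U01; rewrite /wsum /centered_wsum mulr_sumr -big_split /=.
by apply: eq_bigr => i _; rewrite /centered U01; ring.
Qed.

Let bounded_centered_mul_wsum : bounded_measurable (fun t => centered j t * centered_wsum t).
Proof. exact: bounded_measurableM (bounded_centered j) bounded_centered_wsum. Qed.

Lemma covariance_wsum_centered : covariance P (U j) (wsum w U) =
  (\int[P]_t (centered j t * centered_wsum t)%:E)%E.
Proof.
rewrite (covariance_centered_integral (expectation_U j) expectation_wsum).
apply: ae_eq_integral => //.
- by apply/measurable_EFinP; apply: measurable_funM; exact: measurable_funB.
- by apply/measurable_EFinP; case: bounded_centered_mul_wsum.
- apply: filterS clamp01_U_ae => t U01 _; rewrite wsum_centered // addrK.
  by rewrite /centered U01.
Qed.

Let bounded_centered_sqr i : bounded_measurable (fun t => centered i t ^+ 2).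
Proof. by have := bounded_measurableM (bounded_centered i) (bounded_centered i). Qed.

Let integral_centered_sqr i :
  (\int[P]_t (centered i t ^+ 2)%:E = \int[P]_t (centered j t ^+ 2)%:E)%E.
Proof.
apply: (ge0_integral_eq_distribution (g := fun x => (clamp01 x - 2^-1) ^+ 2)).
- by rewrite (U_uniform i) (U_uniform j).
- by apply: measurable_funX; apply: measurable_funB => //; exact: measurable_clamp01.
- by move=> x; exact: sqr_ge0.
Qed.

Let sqr_diff_term i t := w i / 2 * (centered j t ^+ 2 - centered i t ^+ 2).

Let bounded_centered_sqr_diff i :
  bounded_measurable (fun t => centered j t ^+ 2 - centered i t ^+ 2).
Proof.
exact: bounded_measurableD (bounded_centered_sqr j)
                           (bounded_measurableN (bounded_centered_sqr i)).
Qed.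

Let bounded_sqr_diff_term i : bounded_measurable (sqr_diff_term i).
Proof. exact: bounded_measurableM (bounded_measurable_cst _) (bounded_centered_sqr_diff i). Qed.

Let integral_sqr_diff :
  (\int[P]_t (\sum_(i | i != j) sqr_diff_term i t)%:E = 0)%E.
Proof.
rewrite bounded_measurable_integral_sum // big1 // => i _.
under eq_integral do rewrite EFinM.
rewrite (integralZl measurableT (bounded_measurable_integrable _ (bounded_centered_sqr_diff i))).
under eq_integral do rewrite /= EFinB.
rewrite (integralB_EFin measurableT (f1 := fun t => centered j t ^+ 2)
                        (f2 := fun t => centered i t ^+ 2)); last 2 first.
- exact: bounded_measurable_integrable.
- exact: bounded_measurable_integrable.
rewrite (integral_centered_sqr i) subee ?mule0 //.
exact/integrable_fin_num/bounded_measurable_integrable.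
Qed.

Let bounded_antipodal_defect :
  bounded_measurable (fun t => antipodal_defect w j (centered^~ t)).
Proof.
apply: bounded_measurable_sum => i; apply: bounded_measurableM (bounded_measurable_cst _) _.
have bsum := bounded_measurableD (bounded_centered j) (bounded_centered i).
by have := bounded_measurableM bsum bsum.
Qed.

Lemma covariance_wsum_antipodal_defect : covariance P (U j) (wsum w U) =
  (\int[P]_t (antipodal_defect w j (centered^~ t))%:E)%E.
Proof.
rewrite covariance_wsum_centered.
under eq_integral do rewrite mul_weighted_sum_balanced // EFinD.
rewrite integralD //; last 2 first.
- exact: bounded_measurable_integrable.
- exact/bounded_measurable_integrable/bounded_measurable_sum.
by rewrite integral_sqr_diff adde0.
Qed.

Lemma covariance_wsum_ge0 : (0 <= covariance P (U j) (wsum w U))%E.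
Proof.
rewrite covariance_wsum_antipodal_defect; apply: integral_ge0 => t _.
by rewrite lee_fin antipodal_defect_ge0.
Qed.

Lemma wCM_aeP : wCM w U <-> {ae P, forall t, centered_wsum t = 0}.
Proof.
have mwCM : measurable [set t | wsum w U t = 2^-1 * \sum_i w i].
  by rewrite -[X in measurable X]setTI; exact: measurable_wsum (measurable_set1 _).
rewrite /wCM probability1_aeP //.
by split=> ae; apply: filterS2 ae clamp01_U_ae => t /= + U01;
  rewrite (wsum_centered U01) => ?; lra.
Qed.

Lemma covariance_wsum_eq0 : covariance P (U j) (wsum w U) = 0%E <-> wCM w U.
Proof.
rewrite wCM_aeP; split=> [cov0|sum0].
- have defect0 : ae_eq P setT (fun t => (antipodal_defect w j (centered^~ t))%:E) (cst 0%E).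
    apply/(ae_eq_integral_abs P measurableT).
      by apply/measurable_EFinP; case: bounded_antipodal_defect.
    rewrite -cov0 covariance_wsum_antipodal_defect; apply: eq_integral => t _.
    by rewrite gee0_abs // lee_fin antipodal_defect_ge0.
  apply: filterS defect0 => t /(_ I) [] defect0.
  exact: (weighted_sum_eq0_of_antipodal_defect_eq0 w_off_j w_pos).
- rewrite covariance_wsum_centered -(integral0 P setT).
  apply: ae_eq_integral => //.
  + by apply/measurable_EFinP; case: bounded_centered_mul_wsum.
  + by apply: filterS sum0 => t -> _; rewrite mulr0.
Qed.

End covariance_balanced_wsum.

Unset Implicit Arguments.

Theorem mainTheorem9 (R : realType) (dT : measure_display) (T : measurableType dT)
  (P : probability T R) (d : nat) (hd : (2 <= d)%N) (i1 : 'I_d) (hi1 : val i1 = 0%N)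
  (w : 'I_d -> R)
  (wpos : forall i, 0 < w i)
  (wmax : forall i, w i <= w i1)
  (wbal : 2 * w i1 = \sum_(i < d) w i)
  (U : 'I_d -> {RV P >-> R})
  (Uunif : forall i, uniform01 (U i)) :
  (0 <= covariance P (U i1) (wsum w U))%E /\
  (covariance P (U i1) (wsum w U) = 0%E <-> wCM w U).
Proof.
split; first exact: covariance_wsum_ge0.
exact: covariance_wsum_eq0.
Qed.
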